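(* Let $P\in(0,1)$ be irrational and let $V\in\mathbb R^3$ be a good offset for $\Xi_P$. Then the tiling defined by $\Xi_{P,V}$ is coherent: for any two unit squares sharing an edge $e$, the letter of $e$ (as seen from each square) occurs in the label of one square if and only if it occurs in the label of the other.
   Context: Let $\Lambda_P\subset\mathbb R^3$ be the lattice generated by $(2,P,P),(0,2,0),(0,0,2)$, $X_P=\mathbb R^3/\Lambda_P$ with coordinates $(T,U_1,U_2)$ and fundamental domain $[-1,1]^3$, $\Xi_P(x,y)=(2Px+2y,2Px,2Px+2Py)\bmod\Lambda_P$, and for $V\in\mathbb R^3$, $\Xi_{P,V}=\Xi_P+V\bmod\Lambda_P$. Each fiber $\{T\}\times[-1,1]^2$ is partitioned: given $u_1\le u_2\le u_3$, the lines $U_1=u_i$, $U_2=u_i$ cut $[-1,1]^2$ into a $4\times4$ grid of rectangles indexed by (column $a$, row $b$), columns in increasing $U_1$, rows in increasing $U_2$. Special rectangles with single letters: for $T\in[-1,-1+P]$: $(u_1,u_2,u_3)=(T,1-P,2-P+T)$, W $(4,4)$, N $(1,3)$, E $(2,2)$, S $(3,1)$; for $T\in[-1+P,1-P]$: $(-1+P,T,1-P)$, N $(1,4)$, E $(3,3)$, W $(2,2)$, S $(4,1)$; for $T\in[1-P,1]$: $(-2+P+T,-1+P,T)$, N $(2,4)$, W $(3,3)$, S $(4,2)$, E $(1,1)$. A non-special rectangle gets the unordered pair of letters of the special rectangles in its column and in its row; special rectangles get the empty label. The pieces of the partition are the unions over all fibers of rectangles with a given label. Tile centers are the points $(m+\frac12,n+\frac12)$,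 $m,n\in\mathbb Z$, each the center of a unit square with edges N, S, E, W. $V$ is a good offset if $\Xi_{P,V}(c)$ lies in the interior of a piece for every tile center $c$; the tile at $c$ then carries the label of that piece, a label $\{X,Y\}$ meaning a segment joining the midpoints of edges $X$ and $Y$. *)

From Stdlib Require Import Reals ZArith.
Open Scope R_scope.

Inductive letter := lN | lS | lE | lW.

Definition irrational (x : R) : Prop :=
  forall p q : Z, q <> 0%Z -> x <> IZR p / IZR q.

Definition inLat (P a b c : R) : Prop :=
  exists i j k : Z,
    a = 2 * IZR i /\ b = P * IZR i + 2 * IZR j /\ c = P * IZR i + 2 * IZR k.

(* Data of the fiber partition at height T: the cut values u1,u2,u3 and the
   (column,row) position of the special rectangle of each letter.  The three
   T-ranges are closed, as in the paper (they overlap at their endpoints). *)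
Definition fiber_data (P T u1 u2 u3 : R) (sp : letter -> nat * nat) : Prop :=
  (-1 <= T <= -1 + P /\ u1 = T /\ u2 = 1 - P /\ u3 = 2 - P + T /\
     sp lW = (4, 4)%nat /\ sp lN = (1, 3)%nat /\ sp lE = (2, 2)%nat /\ sp lS = (3, 1)%nat)
  \/
  (-1 + P <= T <= 1 - P /\ u1 = -1 + P /\ u2 = T /\ u3 = 1 - P /\
     sp lN = (1, 4)%nat /\ sp lE = (3, 3)%nat /\ sp lW = (2, 2)%nat /\ sp lS = (4, 1)%nat)
  \/
  (1 - P <= T <= 1 /\ u1 = -2 + P + T /\ u2 = -1 + P /\ u3 = T /\
     sp lN = (2, 4)%nat /\ sp lW = (3, 3)%nat /\ sp lS = (4, 2)%nat /\ sp lE = (1, 1)%nat).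

Definition cut (u1 u2 u3 : R) (k : nat) : R :=
  match k with
  | O => -1
  | 1%nat => u1
  | 2%nat => u2
  | 3%nat => u3
  | _ => 1
  end.

(* Closed grid rectangle (a,b), a = column (U1), b = row (U2), a,b in 1..4. *)
Definition in_rect (u1 u2 u3 : R) (a b : nat) (x y : R) : Prop :=
  (1 <= a <= 4)%nat /\ (1 <= b <= 4)%nat /\
  cut u1 u2 u3 (a - 1) <= x <= cut u1 u2 u3 a /\
  cut u1 u2 u3 (b - 1) <= y <= cut u1 u2 u3 b.

Definition is_special (sp : letter -> nat * nat) (a b : nat) : Prop :=
  exists Z, sp Z = (a, b).

Definition rect_has (sp : letter -> nat * nat) (a b : nat) (Z : letter) : Prop :=
  ~ is_special sp a b /\ (fst (sp Z) = a \/ snd (sp Z) = b).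

(* A label is a set of letters.  (t,v1,v2) in R^3 belongs to the (lifted,
   Lambda_P-periodic) piece with label L if its representative in the
   fundamental domain [-1,1]^3 lies in a (closed) rectangle of its fiber
   whose label is exactly L. *)
Definition in_piece (P : R) (L : letter -> Prop) (t v1 v2 : R) : Prop :=
  exists t0 x y : R,
    inLat P (t - t0) (v1 - x) (v2 - y) /\
    -1 <= t0 <= 1 /\ -1 <= x <= 1 /\ -1 <= y <= 1 /\
    exists (u1 u2 u3 : R) (sp : letter -> nat * nat) (a b : nat),
      fiber_data P t0 u1 u2 u3 sp /\ in_rect u1 u2 u3 a b x y /\
      forall Z, rect_has sp a b Z <-> L Z.

(* Interior in R^3 (the quotient map R^3 -> X_P is a local homeomorphism). *)
Definition interior3 (S : R -> R -> R -> Prop) (t v1 v2 : R) : Prop :=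
  exists eps, 0 < eps /\
    forall t' v1' v2', Rabs (t' - t) < eps -> Rabs (v1' - v1) < eps ->
      Rabs (v2' - v2) < eps -> S t' v1' v2'.

(* Xi_{P,V}(x,y), as a point of R^3 (reduction mod Lambda_P is built into
   the periodic pieces). *)
Definition XiT (P V1 : R) (x y : R) : R := 2 * P * x + 2 * y + V1.
Definition XiU1 (P V2 : R) (x y : R) : R := 2 * P * x + V2.
Definition XiU2 (P V3 : R) (x y : R) : R := 2 * P * x + 2 * P * y + V3.

Definition tile_label (P V1 V2 V3 : R) (m n : Z) (L : letter -> Prop) : Prop :=
  let x := IZR m + / 2 in
  let y := IZR n + / 2 in
  interior3 (in_piece P L) (XiT P V1 x y) (XiU1 P V2 x y) (XiU2 P V3 x y).

Definition good_offset (P V1 V2 V3 : R) : Prop :=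
  forall m n : Z, exists L, tile_label P V1 V2 V3 m n L.

Definition coherent (P V1 V2 V3 : R) : Prop :=
  forall (m n : Z) (L L' : letter -> Prop),
    (tile_label P V1 V2 V3 m n L -> tile_label P V1 V2 V3 (m + 1) n L' ->
       (L lE <-> L' lW)) /\
    (tile_label P V1 V2 V3 m n L -> tile_label P V1 V2 V3 m (n + 1) L' ->
       (L lN <-> L' lS)).

(* Both tile centres are mapped into the interior of pieces, so they can be
   moved simultaneously (by the same small vector) to points whose fiber
   coordinates T, X, Y avoid every cut line, both for the first point and for
   its translate; this excludes finitely many conditions z + m P in Z with z
   among T, X, Y, X - T, Y - T.  At such a point the label is the exclusive
   or of "same column as the special rectangle" and "same row as it".  A
   horizontal step of the tiling moves the point by (2P, 2P, 2P) and a
   vertical one by (2, 0, 2P) modulo Lambda_P; a finite case check shows that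
   this carries the column and row tests for E to those for W (both negated
   or neither), and those for N to those for S, so the exclusive or is
   preserved. *)

From Stdlib Require Import Reals ZArith Lra Lia List.
Import ListNotations.
Open Scope R_scope.

Definition not_int (z : R) : Prop := forall n : Z, z <> IZR n.

Lemma not_int_opp z : not_int z -> not_int (- z).
Proof. intros H n E. apply (H (- n)%Z). rewrite opp_IZR. lra. Qed.

Lemma not_int_add_int z i : not_int z -> not_int (z + IZR i).
Proof. intros H n E. apply (H (n - i)%Z). rewrite minus_IZR. lra. Qed.

Lemma affine_avoid_int_pos (a k lo hi : R) : 0 < k -> lo < hi ->
  exists lo' hi', lo <= lo' < hi' /\ hi' <= hi /\
    forall s, lo' < s < hi' -> not_int (a + k * s).
Proof.
  intros Hk Hlh.
  set (z := a + k * lo).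
  destruct (archimed z) as [Hu1 Hu2].
  set (u := up z) in *.
  assert (Hgap : 0 < (IZR u - z) / k) by (apply Rdiv_lt_0_compat; lra).
  exists lo, (Rmin hi (lo + (IZR u - z) / k)).
  split; [split; [lra | apply Rmin_glb_lt; lra] |].
  split; [apply Rmin_l |].
  intros s [Hs1 Hs2] n E.
  assert (Hs3 : k * (s - lo) < k * ((IZR u - z) / k)).
  { apply Rmult_lt_compat_l; [lra |].
    enough (s < lo + (IZR u - z) / k) by lra.
    eapply Rlt_le_trans; [exact Hs2 | apply Rmin_r]. }
  replace (k * ((IZR u - z) / k)) with (IZR u - z) in Hs3 by (field; lra).
  assert (k * lo < k * s) by (apply Rmult_lt_compat_l; lra).
  assert (Hn1 : IZR n < IZR u) by (unfold z in *; lra).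
  assert (Hn2 : IZR (u - 1) < IZR n) by (rewrite minus_IZR; unfold z in *; lra).
  apply lt_IZR in Hn1. apply lt_IZR in Hn2. lia.
Qed.

Lemma affine_avoid_int (a k lo hi : R) : k <> 0 -> lo < hi ->
  exists lo' hi', lo <= lo' < hi' /\ hi' <= hi /\
    forall s, lo' < s < hi' -> not_int (a + k * s).
Proof.
  intros Hk Hlh. destruct (Rlt_dec 0 k) as [Hpos | Hneg].
  - now apply affine_avoid_int_pos.
  - destruct (affine_avoid_int_pos (- a) (- k) lo hi) as (lo' & hi' & H1 & H2 & H3);
      [lra | lra |].
    exists lo', hi'. split; [exact H1 | split; [exact H2 |]].
    intros s Hs. replace (a + k * s) with (- (- a + - k * s)) by ring.
    apply not_int_opp, H3, Hs.
Qed.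

Lemma affine_list_avoid_int (l : list (R * R)) : forall lo hi, lo < hi ->
  (forall p, In p l -> snd p <> 0) ->
  exists lo' hi', lo <= lo' < hi' /\ hi' <= hi /\
    forall s, lo' < s < hi' -> forall p, In p l -> not_int (fst p + snd p * s).
Proof.
  induction l as [| [a k] l IH]; intros lo hi Hlh Hk.
  - exists lo, hi. split; [lra | split; [lra |]]. intros s _ p [].
  - destruct (affine_avoid_int a k lo hi) as (l1 & h1 & A1 & A2 & A3); auto.
    { apply (Hk (a, k)). now left. }
    destruct (IH l1 h1) as (l2 & h2 & B1 & B2 & B3); [lra | intros p Hp; apply Hk; now right |].
    exists l2, h2. split; [lra | split; [lra |]].
    intros s Hs p [<- | Hp].
    + apply A3. lra.
    + now apply B3.
Qed.

Definition Zrange (N : Z) : list Z :=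
  map (fun k => (Z.of_nat k - N)%Z) (seq 0 (Z.to_nat (2 * N + 1))).

Lemma in_Zrange N m : (- N <= m <= N)%Z -> In m (Zrange N).
Proof.
  intros Hm. apply in_map_iff. exists (Z.to_nat (m + N)).
  split; [lia | apply in_seq; lia].
Qed.

Definition coord_forms (T X Y : R) : list R := [T; X; Y; X - T; Y - T].

(* Every cut line of the fiber partitions, and every boundary between the
   three T-ranges, is of the form z + m P = n with z in [coord_forms T X Y]
   and |m| <= 1. *)
Definition generic (N : Z) (P T X Y : R) : Prop :=
  forall m, (- N <= m <= N)%Z ->
    forall z, In z (coord_forms T X Y) -> not_int (z + IZR m * P).

Lemma generic_le M N P T X Y : (M <= N)%Z -> generic N P T X Y -> generic M P T X Y.
Proof. intros HMN HG m Hm. apply HG. lia. Qed.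

Lemma generic_shift N K P T X Y a b c i j k T' X' Y' :
  generic (N + K) P T X Y ->
  (Z.abs a <= K)%Z -> (Z.abs b <= K)%Z -> (Z.abs c <= K)%Z ->
  (Z.abs (b - a) <= K)%Z -> (Z.abs (c - a) <= K)%Z ->
  T' = T + IZR a * P + IZR i -> X' = X + IZR b * P + IZR j ->
  Y' = Y + IZR c * P + IZR k -> generic N P T' X' Y'.
Proof.
  intros HG Ha Hb Hc Hba Hca -> -> -> m Hm z Hz.
  assert (G : forall z e z0 n, (Z.abs e <= K)%Z -> In z0 (coord_forms T X Y) ->
    z + IZR m * P = z0 + IZR (e + m) * P + IZR n -> not_int (z + IZR m * P)).
  { intros z' e z0 n He Hz0 ->. apply not_int_add_int, HG; [lia | exact Hz0]. }
  simpl in Hz.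
  destruct Hz as [<- | [<- | [<- | [<- | [<- | []]]]]].
  - apply (G _ a T i); [lia | simpl; tauto | rewrite plus_IZR; ring].
  - apply (G _ b X j); [lia | simpl; tauto | rewrite plus_IZR; ring].
  - apply (G _ c Y k); [lia | simpl; tauto | rewrite plus_IZR; ring].
  - apply (G _ (b - a)%Z (X - T) (j - i)%Z);
      [lia | simpl; tauto | rewrite !plus_IZR, !minus_IZR; ring].
  - apply (G _ (c - a)%Z (Y - T) (k - i)%Z);
      [lia | simpl; tauto | rewrite !plus_IZR, !minus_IZR; ring].
Qed.

Lemma inward_direction (z c : R) : -1 <= z <= 1 -> 0 < c ->
  exists w, (w = c \/ w = - c) /\ forall s, 0 < s -> s * c < 1 -> -1 < z + w * s < 1.
Proof.
  intros Hz Hc. destruct (Rle_dec z 0).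
  - exists c. split; [now left |]. intros s Hs Hsc.
    assert (0 < c * s) by (apply Rmult_lt_0_compat; lra). lra.
  - exists (- c). split; [now right |]. intros s Hs Hsc.
    assert (0 < c * s) by (apply Rmult_lt_0_compat; lra). lra.
Qed.

Lemma Rabs_signed_lt w c s e : (w = c \/ w = - c) -> 0 <= c -> 0 < s -> s * c < e ->
  Rabs (w * s) < e.
Proof. intros Hw Hc Hs Hse. apply Rabs_def1; destruct Hw; subst; nra. Qed.

Lemma generic_near N P t0 x0 y0 eps :
  -1 <= t0 <= 1 -> -1 <= x0 <= 1 -> -1 <= y0 <= 1 -> 0 < eps ->
  exists T X Y, generic N P T X Y /\
    -1 < T < 1 /\ -1 < X < 1 /\ -1 < Y < 1 /\
    Rabs (T - t0) < eps /\ Rabs (X - x0) < eps /\ Rabs (Y - y0) < eps.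
Proof.
  intros Ht0 Hx0 Hy0 Heps.
  (* Speeds 1, 2, 3 keep the slopes of X - T and Y - T nonzero as well. *)
  destruct (inward_direction t0 1 Ht0 ltac:(lra)) as (wT & HwT & BT).
  destruct (inward_direction x0 2 Hx0 ltac:(lra)) as (wX & HwX & BX).
  destruct (inward_direction y0 3 Hy0 ltac:(lra)) as (wY & HwY & BY).
  set (base := [(t0, wT); (x0, wX); (y0, wY); (x0 - t0, wX - wT); (y0 - t0, wY - wT)]).
  set (l := flat_map (fun m => map (fun p => (fst p + IZR m * P, snd p)) base) (Zrange N)).
  set (hi := Rmin (/ 3) (eps / 3)).
  assert (Hhi : 0 < hi) by (apply Rmin_glb_lt; lra).
  destruct (affine_list_avoid_int l 0 hi Hhi) as (lo' & hi' & H1 & H2 & H3).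
  { intros p Hp. apply in_flat_map in Hp as (m & _ & Hp). apply in_map_iff in Hp as (q & <- & Hq).
    simpl in Hq |- *.
    destruct HwT, HwX, HwY; subst;
      destruct Hq as [<- | [<- | [<- | [<- | [<- | []]]]]]; simpl; lra. }
  set (s := (lo' + hi') / 2).
  assert (Hs : 0 < s < hi) by (unfold s; lra).
  assert (Hs3 : s * 3 < 1 /\ s * 3 < eps).
  { split; apply Rmult_lt_reg_r with (/ 3); try lra;
      (apply Rlt_le_trans with hi; [lra | unfold hi]);
      [ eapply Rle_trans; [apply Rmin_l | lra] | eapply Rle_trans; [apply Rmin_r | lra] ]. }
  exists (t0 + wT * s), (x0 + wX * s), (y0 + wY * s).
  split; [| split; [apply BT; lra | split; [apply BX; lra | split; [apply BY; lra |]]]].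
  - intros m Hm z Hz.
    assert (Hforms : coord_forms (t0 + wT * s) (x0 + wX * s) (y0 + wY * s)
                     = map (fun p => fst p + snd p * s) base).
    { unfold coord_forms, base; cbn [map fst snd]. repeat (f_equal; try ring). }
    rewrite Hforms in Hz. apply in_map_iff in Hz as (q & <- & Hq).
    replace (fst q + snd q * s + IZR m * P) with
      (fst (fst q + IZR m * P, snd q) + snd (fst q + IZR m * P, snd q) * s) by (simpl; ring).
    apply H3; [unfold s; lra |].
    apply in_flat_map. exists m. split; [now apply in_Zrange |].
    exact (in_map (fun p => (fst p + IZR m * P, snd p)) base q Hq).
  - replace (t0 + wT * s - t0) with (wT * s) by ring.
    replace (x0 + wX * s - x0) with (wX * s) by ring.
    replace (y0 + wY * s - y0) with (wY * s) by ring.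
    repeat split; [apply (Rabs_signed_lt wT 1) | apply (Rabs_signed_lt wX 2)
                  | apply (Rabs_signed_lt wY 3)]; lra.
Qed.

(* Off the heights T = -1 + P and T = 1 - P the three cases of [fiber_data]
   are mutually exclusive, which the case analyses below rely on. *)
Definition fiber_data_strict (P T u1 u2 u3 : R) (sp : letter -> nat * nat) : Prop :=
  (-1 < T < -1 + P /\ u1 = T /\ u2 = 1 - P /\ u3 = 2 - P + T /\
     sp lW = (4, 4)%nat /\ sp lN = (1, 3)%nat /\ sp lE = (2, 2)%nat /\ sp lS = (3, 1)%nat)
  \/
  (-1 + P < T < 1 - P /\ u1 = -1 + P /\ u2 = T /\ u3 = 1 - P /\
     sp lN = (1, 4)%nat /\ sp lE = (3, 3)%nat /\ sp lW = (2, 2)%nat /\ sp lS = (4, 1)%nat)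
  \/
  (1 - P < T < 1 /\ u1 = -2 + P + T /\ u2 = -1 + P /\ u3 = T /\
     sp lN = (2, 4)%nat /\ sp lW = (3, 3)%nat /\ sp lS = (4, 2)%nat /\ sp lE = (1, 1)%nat).

Definition in_cell (u1 u2 u3 : R) (a : nat) (x : R) : Prop :=
  (1 <= a <= 4)%nat /\ cut u1 u2 u3 (a - 1) < x < cut u1 u2 u3 a.

Lemma fiber_data_strictify P T u1 u2 u3 sp :
  fiber_data P T u1 u2 u3 sp -> -1 < T < 1 -> T <> -1 + P -> T <> 1 - P ->
  fiber_data_strict P T u1 u2 u3 sp.
Proof.
  unfold fiber_data, fiber_data_strict. intros [H | [H | H]] HT H1 H2.
  - left. destruct H as [HT' H]. split; [lra | exact H].
  - right; left. destruct H as [HT' H]. split; [lra | exact H].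
  - right; right. destruct H as [HT' H]. split; [lra | exact H].
Qed.

Lemma Rle_neq_lt (a b : R) : a <= b -> a <> b -> a < b.
Proof. intros; lra. Qed.

Lemma in_cell_of_closed P T u1 u2 u3 sp a x :
  fiber_data_strict P T u1 u2 u3 sp ->
  -1 < x < 1 -> x <> T -> x <> 1 - P -> x <> 2 - P + T -> x <> -1 + P -> x <> -2 + P + T ->
  (1 <= a <= 4)%nat -> cut u1 u2 u3 (a - 1) <= x <= cut u1 u2 u3 a ->
  in_cell u1 u2 u3 a x.
Proof.
  intros Hf Hx n1 n2 n3 n4 n5 Ha Hc. split; [exact Ha |].
  destruct Hf as [(_ & -> & -> & -> & _) | [(_ & -> & -> & -> & _) | (_ & -> & -> & -> & _)]];
    (destruct a as [| [| [| [| [| a]]]]]; [lia | | | | | lia]);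
    cbn [cut Nat.sub] in *; split; first [lra | apply Rle_neq_lt; [lra | congruence]].
Qed.

Lemma rect_has_xorb (sp : letter -> nat * nat) a b Z :
  (forall Z1 Z2, fst (sp Z1) = fst (sp Z2) -> Z1 = Z2) ->
  (forall Z1 Z2, snd (sp Z1) = snd (sp Z2) -> Z1 = Z2) ->
  rect_has sp a b Z <-> xorb (fst (sp Z) =? a)%nat (snd (sp Z) =? b)%nat = true.
Proof.
  intros Hcol Hrow. unfold rect_has, is_special.
  destruct (Nat.eqb_spec (fst (sp Z)) a) as [Ea | Na],
           (Nat.eqb_spec (snd (sp Z)) b) as [Eb | Nb];
    cbn; split; try discriminate; try (intros _; reflexivity).
  - intros [Hns _]. exfalso. apply Hns. exists Z. rewrite <- Ea, <- Eb. apply surjective_pairing.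
  - intros _. split; [| now left]. intros [Z' HZ'].
    assert (Z' = Z) as -> by (apply Hcol; rewrite HZ'; exact (eq_sym Ea)).
    rewrite HZ' in Nb. auto.
  - intros _. split; [| now right]. intros [Z' HZ'].
    assert (Z' = Z) as -> by (apply Hrow; rewrite HZ'; exact (eq_sym Eb)).
    rewrite HZ' in Na. auto.
  - intros [_ [H | H]]; contradiction.
Qed.

Ltac destruct_fiber Hf :=
  destruct Hf as [(? & ? & ? & ? & ? & ? & ? & ?) | [(? & ? & ? & ? & ? & ? & ? & ?)
                                                  | (? & ? & ? & ? & ? & ? & ? & ?)]].

Ltac rewrite_sp := repeat match goal with H : _ ?l = (_, _)%nat |- _ => rewrite ?H; clear H end.

Lemma fiber_data_rook P T u1 u2 u3 sp : fiber_data P T u1 u2 u3 sp ->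
  (forall Z1 Z2, fst (sp Z1) = fst (sp Z2) -> Z1 = Z2) /\
  (forall Z1 Z2, snd (sp Z1) = snd (sp Z2) -> Z1 = Z2).
Proof.
  intros Hf. destruct_fiber Hf; split; intros [] []; rewrite_sp; cbn; congruence.
Qed.

Lemma fiber_data_EW_diagonal P T u1 u2 u3 sp : fiber_data P T u1 u2 u3 sp ->
  snd (sp lE) = fst (sp lE) /\ snd (sp lW) = fst (sp lW).
Proof. intros Hf. destruct_fiber Hf; rewrite_sp; split; reflexivity. Qed.

Ltac cell_cases :=
  repeat match goal with
  | H : in_cell _ _ _ ?a _ |- _ =>
      destruct H as [? ?]; destruct a as [| [| [| [| [| ?]]]]]; try lia
  end;
  cbn [cut Nat.sub] in *; cbn; first [reflexivity | exfalso; lra].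

Lemma col_E_vs_col_W P T T' x x' (d j : Z) u1 u2 u3 sp u1' u2' u3' sp' a a' :
  0 < P < 1 -> fiber_data_strict P T u1 u2 u3 sp -> fiber_data_strict P T' u1' u2' u3' sp' ->
  (d = 0 \/ d = 1)%Z -> (j = 0 \/ j = 1)%Z ->
  T' = T + 2 * P - 2 * IZR d -> x' = x + (2 - IZR d) * P - 2 * IZR j ->
  in_cell u1 u2 u3 a x -> in_cell u1' u2' u3' a' x' ->
  (a =? fst (sp lE))%nat = xorb (d =? 0)%Z (a' =? fst (sp' lW))%nat.
Proof.
  intros HP Hf Hf' Hd Hj HT Hx Ha Ha'.
  destruct Hd as [-> | ->], Hj as [-> | ->];
    destruct_fiber Hf; destruct_fiber Hf'; subst; try (exfalso; lra); rewrite_sp; cell_cases.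
Qed.

Lemma col_N_vs_col_S P T x x' (j : Z) u1 u2 u3 sp u1' u2' u3' sp' a a' :
  0 < P < 1 -> fiber_data_strict P T u1 u2 u3 sp -> fiber_data_strict P T u1' u2' u3' sp' ->
  (j = -1 \/ j = 0)%Z -> x' = x - P - 2 * IZR j ->
  in_cell u1 u2 u3 a x -> in_cell u1' u2' u3' a' x' ->
  (a =? fst (sp lN))%nat = (a' =? fst (sp' lS))%nat.
Proof.
  intros HP Hf Hf' Hj Hx Ha Ha'.
  destruct Hj as [-> | ->];
    destruct_fiber Hf; destruct_fiber Hf'; subst; try (exfalso; lra); rewrite_sp; cell_cases.
Qed.

Lemma row_N_vs_row_S P T y y' (k : Z) u1 u2 u3 sp u1' u2' u3' sp' b b' :
  0 < P < 1 -> fiber_data_strict P T u1 u2 u3 sp -> fiber_data_strict P T u1' u2' u3' sp' ->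
  (k = 0 \/ k = 1)%Z -> y' = y + P - 2 * IZR k ->
  in_cell u1 u2 u3 b y -> in_cell u1' u2' u3' b' y' ->
  (b =? snd (sp lN))%nat = (b' =? snd (sp' lS))%nat.
Proof.
  intros HP Hf Hf' Hk Hy Hb Hb'.
  destruct Hk as [-> | ->];
    destruct_fiber Hf; destruct_fiber Hf'; subst; try (exfalso; lra); rewrite_sp; cell_cases.
Qed.

Lemma inLat_sub P a1 b1 c1 a2 b2 c2 : inLat P a1 b1 c1 -> inLat P a2 b2 c2 ->
  inLat P (a1 - a2) (b1 - b2) (c1 - c2).
Proof.
  intros (i1 & j1 & k1 & e1 & e2 & e3) (i2 & j2 & k2 & f1 & f2 & f3).
  exists (i1 - i2)%Z, (j1 - j2)%Z, (k1 - k2)%Z. rewrite !minus_IZR. lra.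
Qed.

Lemma inLat_eq P a b c a' b' c' : inLat P a b c -> a = a' -> b = b' -> c = c' -> inLat P a' b' c'.
Proof. now intros H -> -> ->. Qed.

Lemma IZR_bounds (m n i : Z) : IZR m < IZR i < IZR n -> (m < i < n)%Z.
Proof. intros [h1 h2]. apply lt_IZR in h1, h2. lia. Qed.

Lemma inLat_open_cube_eq P T X Y T' X' Y' : inLat P (T' - T) (X' - X) (Y' - Y) ->
  -1 <= T' <= 1 -> -1 < T < 1 -> -1 <= X' <= 1 -> -1 < X < 1 -> -1 <= Y' <= 1 -> -1 < Y < 1 ->
  T' = T /\ X' = X /\ Y' = Y.
Proof.
  intros (i & j & k & e1 & e2 & e3) h1 h2 h3 h4 h5 h6.
  assert (i = 0%Z) as -> by (enough (-1 < i < 1)%Z by lia; apply IZR_bounds; lra).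
  assert (j = 0%Z) as -> by (enough (-1 < j < 1)%Z by lia; apply IZR_bounds; lra).
  assert (k = 0%Z) as -> by (enough (-1 < k < 1)%Z by lia; apply IZR_bounds; lra).
  lra.
Qed.

Lemma in_piece_at_open_rep P L t v1 v2 T X Y :
  in_piece P L t v1 v2 -> inLat P (t - T) (v1 - X) (v2 - Y) ->
  -1 < T < 1 -> -1 < X < 1 -> -1 < Y < 1 ->
  exists u1 u2 u3 sp a b, fiber_data P T u1 u2 u3 sp /\ in_rect u1 u2 u3 a b X Y /\
    forall Z, rect_has sp a b Z <-> L Z.
Proof.
  intros (T' & X' & Y' & Hl & hT & hX & hY & Hdata) Hl' HT HX HY.
  destruct (inLat_open_cube_eq P T X Y T' X' Y') as (-> & -> & ->); auto.
  eapply inLat_eq; [exact (inLat_sub _ _ _ _ _ _ _ Hl' Hl) | ring | ring | ring].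
Qed.

Lemma generic_not_int N P T X Y z : generic N P T X Y -> (0 <= N)%Z ->
  In z (coord_forms T X Y) -> not_int z.
Proof.
  intros HG HN Hz. replace z with (z + IZR 0 * P) by (cbn; ring). apply HG; [lia | exact Hz].
Qed.

Lemma not_int_open_interval z : -1 <= z <= 1 -> not_int z -> -1 < z < 1.
Proof.
  intros Hz Hn. split; apply Rle_neq_lt; try lra; intros E;
    [apply (Hn (-1)%Z) | apply (Hn 1%Z)]; lra.
Qed.

Ltac generic_contra HG m z n :=
  intros ?; apply (HG m ltac:(lia) z ltac:(cbn; tauto) n); lra.

Lemma label_at_generic P L T X Y u1 u2 u3 sp a b :
  generic 1 P T X Y -> -1 <= T <= 1 -> -1 <= X <= 1 -> -1 <= Y <= 1 ->
  fiber_data P T u1 u2 u3 sp -> in_rect u1 u2 u3 a b X Y ->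
  (forall Z, rect_has sp a b Z <-> L Z) ->
  fiber_data_strict P T u1 u2 u3 sp /\ in_cell u1 u2 u3 a X /\ in_cell u1 u2 u3 b Y /\
  forall Z, L Z <-> xorb (fst (sp Z) =? a)%nat (snd (sp Z) =? b)%nat = true.
Proof.
  intros HG hT hX hY Hf (Ha & Hb & HcX & HcY) HL.
  assert (Open : forall z, In z (coord_forms T X Y) -> -1 <= z <= 1 -> -1 < z < 1).
  { intros z Hz Hz1. apply not_int_open_interval; [exact Hz1 |].
    eapply generic_not_int; [exact HG | lia | exact Hz]. }
  assert (Hs : fiber_data_strict P T u1 u2 u3 sp).
  { apply fiber_data_strictify; [exact Hf | apply Open; [cbn; tauto | exact hT] | |].
    - generic_contra HG (-1)%Z T (-1)%Z.
    - generic_contra HG 1%Z T 1%Z. }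
  split; [exact Hs |]. split; [| split].
  - apply (in_cell_of_closed P T u1 u2 u3 sp); auto; [apply Open; [cbn; tauto | exact hX] | ..].
    + generic_contra HG 0%Z (X - T) 0%Z.
    + generic_contra HG 1%Z X 1%Z.
    + generic_contra HG 1%Z (X - T) 2%Z.
    + generic_contra HG (-1)%Z X (-1)%Z.
    + generic_contra HG (-1)%Z (X - T) (-2)%Z.
  - apply (in_cell_of_closed P T u1 u2 u3 sp); auto; [apply Open; [cbn; tauto | exact hY] | ..].
    + generic_contra HG 0%Z (Y - T) 0%Z.
    + generic_contra HG 1%Z Y 1%Z.
    + generic_contra HG 1%Z (Y - T) 2%Z.
    + generic_contra HG (-1)%Z Y (-1)%Z.
    + generic_contra HG (-1)%Z (Y - T) (-2)%Z.
  - intros Z. rewrite <- HL.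
    destruct (fiber_data_rook P T u1 u2 u3 sp Hf) as [Hcol Hrow].
    now apply rect_has_xorb.
Qed.

Lemma generic_common_point N P t v1 v2 h1 h2 h3 L L' :
  interior3 (in_piece P L) t v1 v2 ->
  interior3 (in_piece P L') (t + h1) (v1 + h2) (v2 + h3) ->
  exists T X Y t' v1' v2', generic N P T X Y /\
    -1 < T < 1 /\ -1 < X < 1 /\ -1 < Y < 1 /\
    inLat P (t' - T) (v1' - X) (v2' - Y) /\
    in_piece P L t' v1' v2' /\ in_piece P L' (t' + h1) (v1' + h2) (v2' + h3).
Proof.
  intros (e1 & He1 & H1) (e2 & He2 & H2).
  assert (Hc : in_piece P L t v1 v2) by (apply H1; rewrite Rminus_diag, Rabs_R0; exact He1).
  destruct Hc as (t0 & x0 & y0 & Hl & Ht0 & Hx0 & Hy0 & _).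
  destruct (generic_near N P t0 x0 y0 (Rmin e1 e2) Ht0 Hx0 Hy0 ltac:(now apply Rmin_glb_lt))
    as (T & X & Y & HG & hT & hX & hY & dT & dX & dY).
  pose proof (Rmin_l e1 e2). pose proof (Rmin_r e1 e2).
  exists T, X, Y, (t + (T - t0)), (v1 + (X - x0)), (v2 + (Y - y0)).
  refine (conj HG (conj hT (conj hX (conj hY (conj _ (conj _ _)))))).
  - eapply inLat_eq; [exact Hl | ring | ring | ring].
  - apply H1; ring_simplify (t + (T - t0) - t); ring_simplify (v1 + (X - x0) - v1);
      ring_simplify (v2 + (Y - y0) - v2); lra.
  - apply H2; ring_simplify (t + (T - t0) + h1 - (t + h1));
      ring_simplify (v1 + (X - x0) + h2 - (v1 + h2));
      ring_simplify (v2 + (Y - y0) + h3 - (v2 + h3)); lra.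
Qed.

Ltac IZR_expand := rewrite ?plus_IZR, ?minus_IZR, ?mult_IZR, ?opp_IZR.

Lemma labels_agree_E_W P t v1 v2 t2 v12 v22 L L' : 0 < P < 1 ->
  t2 = t + 2 * P -> v12 = v1 + 2 * P -> v22 = v2 + 2 * P ->
  interior3 (in_piece P L) t v1 v2 -> interior3 (in_piece P L') t2 v12 v22 ->
  (L lE <-> L' lW).
Proof.
  intros HP -> -> -> H1 H2.
  destruct (generic_common_point 3 P _ _ _ _ _ _ L L' H1 H2)
    as (T & X & Y & t' & v1' & v2' & HG & hT & hX & hY & Hl & Hp & Hp').
  destruct (in_piece_at_open_rep P L t' v1' v2' T X Y Hp Hl hT hX hY)
    as (u1 & u2 & u3 & sp & a & b & Hf & Hr & HL).
  destruct Hp' as (T' & X' & Y' & Hl' & hT' & hX' & hY' & u1' & u2' & u3' & sp' & a' & b'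
                   & Hf' & Hr' & HL').
  assert (Hshift : inLat P (T + 2 * P - T') (X + 2 * P - X') (Y + 2 * P - Y')).
  { eapply inLat_eq; [exact (inLat_sub _ _ _ _ _ _ _ Hl' Hl) | ring | ring | ring]. }
  destruct Hshift as (d & j & k & Ed & Ej & Ek).
  assert (Hd : (d = 0 \/ d = 1)%Z) by (enough (-1 < d < 2)%Z by lia; apply IZR_bounds; lra).
  assert (Hj : (j = 0 \/ j = 1)%Z)
    by (enough (-1 < j < 2)%Z by lia; apply IZR_bounds; destruct Hd; subst; lra).
  assert (Hk : (k = 0 \/ k = 1)%Z)
    by (enough (-1 < k < 2)%Z by lia; apply IZR_bounds; destruct Hd; subst; lra).
  assert (HG' : generic 1 P T' X' Y').
  { apply (generic_shift 1 2 P T X Y 2 (2 - d) (2 - d) (-2 * d) (-2 * j) (-2 * k)%Z);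
      [exact HG | lia .. | | |]; IZR_expand; lra. }
  destruct (label_at_generic P L T X Y u1 u2 u3 sp a b (generic_le 1 3 _ _ _ _ ltac:(lia) HG)
              ltac:(lra) ltac:(lra) ltac:(lra) Hf Hr HL) as (Hs & Ha & Hb & HLab).
  destruct (label_at_generic P L' T' X' Y' u1' u2' u3' sp' a' b' HG' hT' hX' hY' Hf' Hr' HL')
    as (Hs' & Ha' & Hb' & HLab').
  destruct (fiber_data_EW_diagonal P T u1 u2 u3 sp Hf) as [DE _].
  destruct (fiber_data_EW_diagonal P T' u1' u2' u3' sp' Hf') as [_ DW].
  rewrite HLab, HLab', DE, DW, !(Nat.eqb_sym (fst _)).
  rewrite (col_E_vs_col_W P T T' X X' d j u1 u2 u3 sp u1' u2' u3' sp' a a') by (auto; lra).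
  rewrite (col_E_vs_col_W P T T' Y Y' d k u1 u2 u3 sp u1' u2' u3' sp' b b') by (auto; lra).
  destruct (d =? 0)%Z, (a' =? fst (sp' lW))%nat, (b' =? fst (sp' lW))%nat; cbn; tauto.
Qed.

Lemma labels_agree_N_S P t v1 v2 t2 v12 v22 L L' : 0 < P < 1 ->
  t2 = t + 2 -> v12 = v1 -> v22 = v2 + 2 * P ->
  interior3 (in_piece P L) t v1 v2 -> interior3 (in_piece P L') t2 v12 v22 ->
  (L lN <-> L' lS).
Proof.
  intros HP -> Hv1 -> H1 H2. rewrite Hv1, <- (Rplus_0_r v1) in H2.
  destruct (generic_common_point 2 P _ _ _ _ _ _ L L' H1 H2)
    as (T & X & Y & t' & v1' & v2' & HG & hT & hX & hY & Hl & Hp & Hp').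
  destruct (in_piece_at_open_rep P L t' v1' v2' T X Y Hp Hl hT hX hY)
    as (u1 & u2 & u3 & sp & a & b & Hf & Hr & HL).
  destruct Hp' as (T' & X' & Y' & Hl' & hT' & hX' & hY' & u1' & u2' & u3' & sp' & a' & b'
                   & Hf' & Hr' & HL').
  assert (Hshift : inLat P (T + 2 - T') (X + 0 - X') (Y + 2 * P - Y')).
  { eapply inLat_eq; [exact (inLat_sub _ _ _ _ _ _ _ Hl' Hl) | ring | ring | ring]. }
  destruct Hshift as (d & j & k & Ed & Ej & Ek).
  assert (d = 1%Z) as -> by (enough (0 < d < 2)%Z by lia; apply IZR_bounds; lra).
  assert (T' = T) as -> by lra.
  assert (Hj : (j = -1 \/ j = 0)%Z) by (enough (-2 < j < 1)%Z by lia; apply IZR_bounds; lra).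
  assert (Hk : (k = 0 \/ k = 1)%Z) by (enough (-1 < k < 2)%Z by lia; apply IZR_bounds; lra).
  assert (HG' : generic 1 P T X' Y').
  { apply (generic_shift 1 1 P T X Y 0 (-1) 1 0 (-2 * j) (-2 * k)%Z);
      [exact HG | lia .. | | |]; IZR_expand; lra. }
  destruct (label_at_generic P L T X Y u1 u2 u3 sp a b (generic_le 1 2 _ _ _ _ ltac:(lia) HG)
              ltac:(lra) ltac:(lra) ltac:(lra) Hf Hr HL) as (Hs & Ha & Hb & HLab).
  destruct (label_at_generic P L' T X' Y' u1' u2' u3' sp' a' b' HG' hT' hX' hY' Hf' Hr' HL')
    as (Hs' & Ha' & Hb' & HLab').
  rewrite HLab, HLab', (Nat.eqb_sym (fst _)), (Nat.eqb_sym (snd _)).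
  rewrite (col_N_vs_col_S P T X X' j u1 u2 u3 sp u1' u2' u3' sp' a a') by (auto; lra).
  rewrite (row_N_vs_row_S P T Y Y' k u1 u2 u3 sp u1' u2' u3' sp' b b') by (auto; lra).
  now rewrite (Nat.eqb_sym a'), (Nat.eqb_sym b').
Qed.

Theorem lemma3p7 (P V1 V2 V3 : R) :
  0 < P < 1 -> irrational P -> good_offset P V1 V2 V3 -> coherent P V1 V2 V3.
Proof.
  (* Interiority of both tile points already provides generic perturbations. *)
  intros HP _ _ m n L L'. unfold tile_label. cbv zeta.
  split; intros H1 H2.
  - refine (labels_agree_E_W P _ _ _ _ _ _ L L' HP _ _ _ H1 H2);
      unfold XiT, XiU1, XiU2; rewrite ?plus_IZR; ring.
  - refine (labels_agree_N_S P _ _ _ _ _ _ L L' HP _ _ _ H1 H2);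
      unfold XiT, XiU1, XiU2; rewrite ?plus_IZR; ring.
Qed.
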